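(* Let $n\geq2$ be finite and $\mathfrak A\in SA_n$. Then the canonical extension $\mathfrak A^+$ of $\mathfrak A$ is completely representable.
   Context: $SA_n=\mathbf{Mod}(\Sigma'_n)$, where $\Sigma'_n$ (signature $\wedge,-,s^i_j,s_{ij}$, $i\neq j<n$) consists of the Boolean axioms, equations saying each $s^i_j,s_{ij}$ is a Boolean endomorphism, and $t_1(x)=t_2(x)$ for all words $t_1,t_2$ with the same associated map in ${}^nn$ (words map to compositions of the transpositions $[i,j]$ and replacements $[i/j]$, where $[i/j]$ sends $i$ to $j$ and fixes the rest). The canonical extension $\mathfrak A^+$ is the complex algebra of the ultrafilter frame of $\mathfrak A$: universe $\mathcal P(\mathrm{Uf}\mathfrak A)$, and for each unary operator $f$, $f^+(Y)=\{u\in\mathrm{Uf}\mathfrak A:\exists w\in Y\ \forall b\in w\ f(b)\in u\}$. $\mathfrak B$ is completely representable if there is an injective homomorphism $g:\mathfrak B\to\wp(D)$ with $D$ dipermutable (closed under $s\mapsto s\circ[i/j]$ and $s\mapsto s\circ[i,j]$) and $g(\prod Y)=\bigcap g[Y]$ whenever $\prod Y$ exists; $\wp(D)$ carries $\cap$, complement relative to $D$, $S^i_j(X)=\{q\in D:q\circ[i/j]\in X\}$, $S_{ij}(X)=\{q\in D:q\circ[i,j]\in X\}$. *)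

From HB Require Import structures.
From mathcomp Require Import all_boot.
Set Implicit Arguments. Unset Strict Implicit. Unset Printing Implicit Defensive.

(* The operators are given for all pairs (i,j); only those with i <> j are
   ever constrained or used (the paper's signature has i <> j only). *)
Record SAsig (n : nat) := SAsig_mk {
  sa_car :> Type;
  sa_meet : sa_car -> sa_car -> sa_car;
  sa_compl : sa_car -> sa_car;
  sa_sub : 'I_n -> 'I_n -> sa_car -> sa_car;
  sa_swp : 'I_n -> 'I_n -> sa_car -> sa_car }.

Definition repl n (i j : 'I_n) : 'I_n -> 'I_n :=
  fun k => if k == i then j else k.
Definition transp n (i j : 'I_n) : 'I_n -> 'I_n :=
  fun k => if k == i then j else if k == j then i else k.

Inductive letter (n : nat) := LSub of 'I_n & 'I_n | LSwp of 'I_n & 'I_n.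

Definition letter_ok n (l : letter n) : bool :=
  match l with LSub i j => i != j | LSwp i j => i != j end.

Definition letter_map n (l : letter n) : 'I_n -> 'I_n :=
  match l with LSub i j => repl i j | LSwp i j => transp i j end.

Definition letter_op n (A : SAsig n) (l : letter n) : A -> A :=
  match l with LSub i j => @sa_sub n A i j | LSwp i j => @sa_swp n A i j end.

Arguments letter_op {n} A l _.

Definition word_map n (w : seq (letter n)) : 'I_n -> 'I_n :=
  foldr (fun l f => letter_map l \o f) id w.

Definition word_op n (A : SAsig n) (w : seq (letter n)) : A -> A :=
  foldr (fun l f => letter_op A l \o f) id w.

(* Boolean algebra axioms in the signature (meet, complement):
   commutativity, associativity and Huntington's axiom (written for meet). *)
Arguments word_op {n} A w _.

Definition boolean_axioms n (A : SAsig n) : Prop :=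
  [/\ (forall x y : A, @sa_meet n A x y = @sa_meet n A y x),
      (forall x y z : A, @sa_meet n A (@sa_meet n A x y) z = @sa_meet n A x (@sa_meet n A y z))
    & (forall x y : A,
         @sa_meet n A (@sa_compl n A (@sa_meet n A (@sa_compl n A x) y))
                   (@sa_compl n A (@sa_meet n A (@sa_compl n A x) (@sa_compl n A y))) = x)].

Definition bool_endo n (A : SAsig n) (f : A -> A) : Prop :=
  (forall x y, f (@sa_meet n A x y) = @sa_meet n A (f x) (f y)) /\
  (forall x, f (@sa_compl n A x) = @sa_compl n A (f x)).

Definition is_SA n (A : SAsig n) : Prop :=
  [/\ boolean_axioms A,
      (forall i j : 'I_n, i != j -> bool_endo (@sa_sub n A i j)),
      (forall i j : 'I_n, i != j -> bool_endo (@sa_swp n A i j))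
    & (forall w1 w2 : seq (letter n),
         all (@letter_ok n) w1 -> all (@letter_ok n) w2 ->
         (forall k, word_map w1 k = word_map w2 k) ->
         forall x : A, word_op A w1 x = word_op A w2 x)].

Definition sa_le n (A : SAsig n) (x y : A) : Prop := @sa_meet n A x y = x.

Arguments sa_le {n} A x y.

Definition is_ultrafilter n (A : SAsig n) (u : A -> Prop) : Prop :=
  [/\ (forall x y, u x -> sa_le A x y -> u y),
      (forall x y, u x -> u y -> u (@sa_meet n A x y)),
      (forall x, u x \/ u (@sa_compl n A x))
    & (forall x, ~ (u x /\ u (@sa_compl n A x)))].

Arguments is_ultrafilter {n} A u.

Record Uf n (A : SAsig n) := Uf_mk {
  uf_pred :> A -> Prop;
  uf_prop : is_ultrafilter A uf_pred }.

Arguments Uf {n} A.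

Definition plus_op n (A : SAsig n) (f : A -> A) (Y : Uf A -> Prop) : Uf A -> Prop :=
  fun u => exists w : Uf A, Y w /\ forall b : A, w b -> u (f b).

Arguments plus_op {n} A f Y _.

(* The canonical extension A^+ : complex algebra of the ultrafilter frame,
   universe P(Uf A) (subsets as predicates). *)
Definition canext n (A : SAsig n) : SAsig n :=
  @SAsig_mk n (Uf A -> Prop)
    (fun X Y u => X u /\ Y u)
    (fun X u => ~ X u)
    (fun i j => plus_op A (@sa_sub n A i j))
    (fun i j => plus_op A (@sa_swp n A i j)).

Definition is_glb n (B : SAsig n) (Y : B -> Prop) (p : B) : Prop :=
  (forall y, Y y -> sa_le B p y) /\
  (forall q, (forall y, Y y -> sa_le B q y) -> sa_le B q p).

Definition dipermutable n (U : Type) (D : ('I_n -> U) -> Prop) : Prop :=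
  forall (q : 'I_n -> U) (i j : 'I_n), i != j -> D q ->
    D (q \o repl i j) /\ D (q \o transp i j).

(* Complete representability: an injective homomorphism g : B -> P(D)
   (set equalities stated pointwise) preserving all existing infima. *)
Definition completely_representable n (B : SAsig n) : Prop :=
  exists (U : Type) (D : ('I_n -> U) -> Prop) (g : B -> ('I_n -> U) -> Prop),
    dipermutable D /\
        (forall x q, g x q -> D q) /\
        (forall x y, (forall q, g x q <-> g y q) -> x = y) /\
        (forall x y q, g (@sa_meet n B x y) q <-> g x q /\ g y q) /\
        (forall x q, g (@sa_compl n B x) q <-> D q /\ ~ g x q) /\
        (forall (i j : 'I_n), i != j -> forall x q,
            g (@sa_sub n B i j x) q <-> D q /\ g x (q \o repl i j)) /\
        (forall (i j : 'I_n), i != j -> forall x q,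
            g (@sa_swp n B i j x) q <-> D q /\ g x (q \o transp i j)) /\
        (forall (Y : B -> Prop) (p : B), is_glb Y p ->
            forall q, g p q <-> D q /\ (forall y, Y y -> g y q)).

(* Every word over the allowed letters acts on A as a
   Boolean endomorphism, and the preimage of an ultrafilter under a Boolean
   endomorphism f is again an ultrafilter; in the ultrafilter frame f^+ is
   then "preimage by the pulled-back ultrafilter" (lemma [plus_op_pull]).

   The representation uses the base U = Uf A * 'I_n and the set D of
   sequences k |-> (u, tau k) with tau the map of a word w of allowed letters.
   Such a sequence is labelled by the ultrafilter {b | word_op w b \in u}; by
   the word equations of Sigma'_n this label does not depend on the chosen
   presentation (u, w) ([label_unique]).  A set X of ultrafilters is sent to
   the sequences of D whose label lies in X.  Meets, complements and arbitrary
   infima (which in a power set are intersections) are then preserved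
   pointwise; substitutions are preserved because appending a letter to the
   word pulls the label back along that letter ([labelled_letter]); and the
   map is injective since the sequence k |-> (v, k) is labelled by v. *)

From Stdlib Require Import FunctionalExtensionality PropExtensionality ProofIrrelevance.
From HB Require Import structures.
From mathcomp Require Import all_boot.

Set Implicit Arguments. Unset Strict Implicit. Unset Printing Implicit Defensive.

(* Words compose on the left, so appending a letter acts first. *)
Lemma word_op_rcons n (A : SAsig n) w l x :
  word_op A (rcons w l) x = word_op A w (letter_op A l x).
Proof. by elim: w => [|l' w IH] //=; rewrite IH. Qed.

Lemma word_map_rcons n (w : seq (letter n)) l k :
  word_map (rcons w l) k = word_map w (letter_map l k).
Proof. by elim: w => [|l' w IH] //=; rewrite IH. Qed.

Lemma canext_glb n (A : SAsig n) (Y : (Uf A -> Prop) -> Prop) (p : Uf A -> Prop) :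
  is_glb (B := canext A) Y p -> forall v, p v <-> forall y, Y y -> y v.
Proof.
move=> [Hlb Hgr] v; split.
  move=> pv y /Hlb /(congr1 (fun f : Uf A -> Prop => f v)) E.
  by move: pv; rewrite -E => -[].
pose cap := fun u : Uf A => forall y, Y y -> y u.
have Hcap : (fun u => cap u /\ p u) = cap.
  apply: (Hgr cap) => y Yy; apply: functional_extensionality => u.
  by apply: propositional_extensionality; split=> [[] | Hu] //; split=> //; apply: Hu.
by move=> Hv; move: (Hv : cap v); rewrite -Hcap => -[].
Qed.

Section Ultrafilters.
Variables (n : nat) (A : SAsig n).

Lemma uf_eq (u v : Uf A) : (forall b, u b <-> v b) -> u = v.
Proof.
case: u v => [pu Hu] [pv Hv] /= H.
have E : pu = pv.
  by apply: functional_extensionality => b; apply: propositional_extensionality.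
by subst pv; f_equal; apply: proof_irrelevance.
Qed.

Lemma uf_sub (u v : Uf A) : (forall b, u b -> v b) -> u = v.
Proof.
move=> H; apply: uf_eq => b; split; first exact: H.
case: (uf_prop u) (uf_prop v) => _ _ Hu _ [_ _ _ Hv] vb.
by case: (Hu b) => // ub'; case: (Hv b); split=> //; apply: H.
Qed.

Variables (f : A -> A) (Hf : bool_endo f).

Lemma pull_ultrafilter (u : Uf A) : is_ultrafilter A (fun b => u (f b)).
Proof.
case: Hf (uf_prop u) => Hmeet Hcompl [U1 U2 U3 U4]; split.
- by move=> x y ux Hxy; apply: (U1 _ _ ux); rewrite /sa_le -Hmeet Hxy.
- by move=> x y ux uy; rewrite Hmeet; apply: U2.
- by move=> x; rewrite Hcompl; apply: U3.
- by move=> x; rewrite Hcompl; apply: U4.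
Qed.

Definition uf_pull (u : Uf A) : Uf A := Uf_mk (pull_ultrafilter u).

Lemma plus_op_pull (X : Uf A -> Prop) (v : Uf A) :
  plus_op A f X v <-> X (uf_pull v).
Proof.
split=> [[w [Xw Hw]] | Xv]; last by exists (uf_pull v).
by have -> : uf_pull v = w by symmetry; apply: uf_sub.
Qed.

End Ultrafilters.

Section Representation.
Variables (n : nat) (A : SAsig n).
Hypotheses (HA : is_SA A) (Hn0 : 0 < n).

Lemma letter_endo (l : letter n) : letter_ok l -> bool_endo (letter_op A l).
Proof. by case: HA => _ Hs Hw _; case: l => i j /= Hij; [apply: Hs | apply: Hw]. Qed.

Lemma word_endo (w : seq (letter n)) : all (@letter_ok n) w -> bool_endo (word_op A w).
Proof.
elim: w => [|l w IH] /=; first by split.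
move=> /andP [/letter_endo [L1 L2] /IH [W1 W2]].
by split=> * /=; rewrite ?W1 ?L1 ?W2 ?L2.
Qed.

Definition point := (Uf A * 'I_n)%type.

Definition word_seq (q : 'I_n -> point) : Prop :=
  exists u w, all (@letter_ok n) w /\ forall k, q k = (u, word_map w k).

Definition labelled (q : 'I_n -> point) (v : Uf A) : Prop :=
  exists u w, [/\ all (@letter_ok n) w, forall k, q k = (u, word_map w k)
                & forall b, v b <-> u (word_op A w b)].

Definition rep (X : Uf A -> Prop) (q : 'I_n -> point) : Prop :=
  exists2 v, labelled q v & X v.

Lemma labelled_word_seq q v : labelled q v -> word_seq q.
Proof. by case=> u [w [Hw Hq _]]; exists u, w. Qed.

Lemma label_exists q : word_seq q -> exists v, labelled q v.
Proof.
case=> u [w [Hw Hq]]; exists (uf_pull (word_endo Hw) u).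
by exists u, w; split.
Qed.

(* The label is independent of the presentation, by the word equations. *)
Lemma label_unique q v v' : labelled q v -> labelled q v' -> v = v'.
Proof.
case=> u [w [Hw Hq Hv]] [u' [w' [Hw' Hq' Hv']]].
have Eq k : (u, word_map w k) = (u', word_map w' k) by rewrite -Hq -Hq'.
have Eu : u = u' := congr1 fst (Eq (Ordinal Hn0)).
have Hmap k : word_map w k = word_map w' k := congr1 snd (Eq k).
case: HA => _ _ _ Hwords.
by apply: uf_eq => b; rewrite Hv Hv' Eu (Hwords w w' Hw Hw' Hmap).
Qed.

Lemma rep_at q v X : labelled q v -> rep X q <-> X v.
Proof.
move=> Hv; split=> [[v' Hv' Xv'] | Xv]; last by exists v.
by rewrite (label_unique Hv Hv').
Qed.

Lemma labelled_letter q v (l : letter n) (Hl : letter_ok l) :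
  labelled q v -> labelled (q \o letter_map l) (uf_pull (letter_endo Hl) v).
Proof.
case=> u [w [Hw Hq Hv]]; exists u, (rcons w l); split.
- by rewrite all_rcons Hl Hw.
- by move=> k /=; rewrite Hq word_map_rcons.
- by move=> b /=; rewrite Hv word_op_rcons.
Qed.

Lemma word_seq_dipermutable : dipermutable word_seq.
Proof.
move=> q i j Hij [u [w [Hw Hq]]].
split; [exists u, (rcons w (LSub i j)) | exists u, (rcons w (LSwp i j))];
  by split=> [|k]; rewrite ?all_rcons /= ?Hij ?Hw // Hq word_map_rcons.
Qed.

(* The sequence k |-> (v, k) is labelled by v, so X is recovered from rep X. *)
Lemma rep_injective X Y : (forall q, rep X q <-> rep Y q) -> X = Y.
Proof.
move=> H; apply: functional_extensionality => v; apply: propositional_extensionality.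
have Hid : labelled (fun k => (v, k)) v by exists v, [::].
by rewrite -(rep_at X Hid) -(rep_at Y Hid).
Qed.

Lemma rep_meet X Y q : rep (fun u => X u /\ Y u) q <-> rep X q /\ rep Y q.
Proof.
split=> [[v Hv XYv] | [[v Hv Xv] HY]]; first by rewrite !(rep_at _ Hv).
by exists v; move: HY; rewrite (rep_at _ Hv).
Qed.

Lemma rep_compl X q : rep (fun u => ~ X u) q <-> word_seq q /\ ~ rep X q.
Proof.
split=> [[v Hv nXv] | [/label_exists [v Hv]]].
  by split; [apply: labelled_word_seq Hv | rewrite (rep_at _ Hv)].
by rewrite (rep_at _ Hv) -(rep_at (fun u => ~ X u) Hv).
Qed.

Lemma rep_letter (l : letter n) : letter_ok l -> forall X q,
  rep (plus_op A (letter_op A l) X) q <-> word_seq q /\ rep X (q \o letter_map l).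
Proof.
move=> Hl X q; split=> [Hq | [/label_exists [v Hv]]].
  have [v Hv _] := Hq; split; first exact: labelled_word_seq Hv.
  by move: Hq; rewrite (rep_at _ Hv) (rep_at _ (labelled_letter Hl Hv)) (plus_op_pull (letter_endo Hl)).
by rewrite (rep_at _ Hv) (rep_at _ (labelled_letter Hl Hv)) (plus_op_pull (letter_endo Hl)).
Qed.

(* Existing infima of the power set are intersections, hence preserved. *)
Lemma rep_glb (Y : (Uf A -> Prop) -> Prop) p : is_glb (B := canext A) Y p ->
  forall q, rep p q <-> word_seq q /\ (forall y, Y y -> rep y q).
Proof.
move=> Hp q; split=> [Hq | [/label_exists [v Hv] HY]].
  have [v Hv _] := Hq; split; first exact: labelled_word_seq Hv.
  by move: Hq => /(rep_at _ Hv) /(canext_glb Hp) H y /H /(rep_at _ Hv).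
by apply/(rep_at _ Hv)/(canext_glb Hp) => y /HY /(rep_at _ Hv).
Qed.

End Representation.

Theorem theorem4p17 (n : nat) (Hn : 2 <= n) (A : SAsig n) (HA : is_SA A) :
  completely_representable (canext A).
Proof.
have Hn0 : 0 < n by apply: leq_trans Hn.
exists (point A), (@word_seq n A), (@rep n A).
split; first exact: word_seq_dipermutable.
split; first by move=> X q [v /labelled_word_seq].
split; first exact: rep_injective.
split; first exact: rep_meet.
split; first exact: rep_compl.
split; first by move=> i j Hij; apply: (rep_letter HA Hn0 (l := LSub i j)).
split; first by move=> i j Hij; apply: (rep_letter HA Hn0 (l := LSwp i j)).
exact: rep_glb.
Qed.
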